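(* Let $G$ be a connected graph of order $n$. Then $\mathrm{sn}(G)=n-1$ if and only if $G=K_n$. Also, $\overline{\mathrm{scs}}(G)=n-1$ if and only if $G=K_n$.
   Context: All graphs are finite and simple. For a graph $G=(V,E)$ and an integer $k\ge\chi(G)$, a proper $k$-colouring is a map $c:V\to[k]=\{1,\dots,k\}$ with $c(u)\neq c(v)$ for every edge $uv$. A set $S\subseteq V$ is a determining set for $(G,c)$ if there is no proper $k$-colouring $c'\neq c$ of $G$ with $c'(s)=c(s)$ for all $s\in S$. A critical set for $(G,c)$ is an inclusion-minimal determining set. $\mathrm{scs}(G,c)$ and $\mathrm{lcs}(G,c)$ denote the size of a smallest resp. largest critical set for $(G,c)$. $\mathrm{sn}(G,k)$ is the minimum of $\mathrm{scs}(G,c)$ over all proper $k$-colourings $c$ (equivalently, the minimum number of vertices coloured in a partial colouring that extends uniquely to a proper $k$-colouring); $\overline{\mathrm{scs}}(G,k)$ is the maximum of $\mathrm{scs}(G,c)$ over all proper $k$-colourings $c$. When $k=\chi(G)$ the second argument is omitted: $\mathrm{sn}(G)=\mathrm{sn}(G,\chi(G))$, $\overline{\mathrm{scs}}(G)=\overline{\mathrm{scs}}(G,\chi(G))$. $K_n$ is the complete graph on $n$ vertices. *)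

From mathcomp Require Import all_boot.
Set Implicit Arguments. Unset Strict Implicit. Unset Printing Implicit Defensive.

(* A simple graph: a symmetric irreflexive relation e on a finite type T.
   Colours [k] = {1..k} are represented by 'I_k = {0..k-1}. *)
Section Colouring.
Variables (T : finType) (e : rel T).

Definition colouring (k : nat) := {ffun T -> 'I_k}.

Definition proper (k : nat) (c : colouring k) : bool :=
  [forall x, forall y, e x y ==> (c x != c y)].

Definition colourable (k : nat) : bool := [exists c : colouring k, proper c].

Definition is_chi (k : nat) : Prop :=
  colourable k /\ forall j, j < k -> ~~ colourable j.

Definition determining (k : nat) (c : colouring k) (S : {set T}) : bool :=
  [forall c' : colouring k,
     (proper c' && [forall s in S, c' s == c s]) ==> (c' == c)].

Definition critical (k : nat) (c : colouring k) (S : {set T}) : bool :=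
  minset (determining c) S.

(* size of a smallest critical set (critical sets always exist, since setT
   is determining; the default #|T| is never attained spuriously) *)
Definition scs (k : nat) (c : colouring k) : nat :=
  \big[minn/#|T|]_(S : {set T} | critical c S) #|S|.

Definition sn (k : nat) : nat :=
  \big[minn/#|T|]_(c : colouring k | proper c) scs c.

Definition scsbar (k : nat) : nat :=
  \max_(c : colouring k | proper c) scs c.

Definition connected_graph : Prop := forall x y : T, connect e x y.

Definition complete_graph : Prop := forall x y : T, x != y -> e x y.

End Colouring.

From Pilot Require Import Defs.
From mathcomp Require Import all_boot fingroup perm zify.
Set Implicit Arguments. Unset Strict Implicit. Unset Printing Implicit Defensive.

(* Complete graph: a proper n-colouring is a bijection onto the colours.
   Swapping the colours of two uncoloured vertices shows that a determining
   set misses at most one vertex, while the last vertex is forced because it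
   sees all n - 1 other colours; so every critical set has n - 1 vertices.

   Non-complete connected graph: in a chi-colouring every colour class has a
   b-vertex, i.e. a vertex with a neighbour in every other class, otherwise
   that class could be recoloured away.  From this one finds distinct x, y
   such that x is a b-vertex and y still sees every other colour when x is
   removed.  Colouring all vertices but x and y first forces y, then x, so
   every chi-colouring has a critical set of at most n - 2 vertices. *)

Lemma geq_bigmin_cond (I : finType) (P : pred I) (m : nat) (F : I -> nat) i0 :
  P i0 -> \big[minn/m]_(i | P i) F i <= F i0.
Proof.
move=> Pi0; have: i0 \in index_enum I by rewrite mem_index_enum.
elim: (index_enum I) => [//|j s IHs]; rewrite big_cons in_cons.
case/orP => [/eqP <-|/IHs le_s]; first by rewrite Pi0 geq_minl.
by case: (P j) => //; apply: leq_trans (geq_minr _ _) le_s.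
Qed.

Lemma leq_bigmin (I : finType) (P : pred I) (m a : nat) (F : I -> nat) :
  a <= m -> (forall i, P i -> a <= F i) -> a <= \big[minn/m]_(i | P i) F i.
Proof. by move=> am aF; elim/big_ind: _ => // x y ax ay; rewrite leq_min ax ay. Qed.

Lemma connect_cross (T : finType) (r : rel T) (P : pred T) a b :
  connect r a b -> P a -> ~~ P b -> exists x y, [/\ r x y, P x & ~~ P y].
Proof.
move=> /connectP [p r_p ->].
elim: p a r_p => [|z p IHp] a /=; first by move=> _ ->.
move=> /andP [raz r_p] Pa nPb.
case Pz: (P z); first exact: IHp r_p Pz nPb.
by exists a, z; rewrite Pz.
Qed.

Section Colourings.
Variables (T : finType) (e : rel T).
Hypotheses (e_sym : symmetric e) (e_irr : irreflexive e).

Lemma properP k (c : colouring T k) :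
  reflect (forall u v, e u v -> c u != c v) (Defs.proper e c).
Proof.
apply: (iffP forallP) => [pc u v|pc u]; first by move/forallP/(_ v)/implyP: (pc u).
by apply/forallP => v; apply/implyP; apply: pc.
Qed.

Lemma completeP : reflect (complete_graph e) [forall u, forall v, (u != v) ==> e u v].
Proof.
apply: (iffP forallP) => [all_e u v|comp u]; first by move/forallP/(_ v)/implyP: (all_e u).
by apply/forallP => v; apply/implyP; apply: comp.
Qed.

Lemma colourable_card : colourable e #|T|.
Proof.
apply/existsP; exists [ffun v => enum_rank v]; apply/properP => u v euv.
rewrite !ffunE; apply: contraTneq euv => /enum_rank_inj ->.
by rewrite e_irr.
Qed.

Section Determining.
Variables (k : nat) (c : colouring T k).

Lemma determiningP (S : {set T}) :
  reflect (forall c', Defs.proper e c' -> {in S, c' =1 c} -> c' = c)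
          (determining e c S).
Proof.
apply: (iffP forallP) => [det c' pc' agr|det c'].
  apply/eqP; move/implyP: (det c'); apply; rewrite pc'.
  by apply/forallP => s; apply/implyP => sS; rewrite agr.
apply/implyP => /andP [pc' /forallP agr]; apply/eqP/det => // s sS.
by apply/eqP; move/implyP: (agr s); apply.
Qed.

Lemma scs_leq_card (S : {set T}) : determining e c S -> scs e c <= #|S|.
Proof.
move=> detS; have [A critA sAS] := minset_exists detS.
exact: leq_trans (geq_bigmin_cond _ _ critA) (subset_leq_card sAS).
Qed.

Lemma leq_scs a :
  a <= #|T| -> (forall S, determining e c S -> a <= #|S|) -> a <= scs e c.
Proof. by move=> aT a_det; apply: leq_bigmin => // S /minsetP [/a_det]. Qed.

Definition sees_colours (A : {set T}) v :=
  [forall j : 'I_k, (j != c v) ==> [exists w in A, e v w && (c w == j)]].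

Definition b_vertex v := sees_colours [set: T] v.

Lemma sees_colours_setD1 A v x :
  ~~ e v x -> sees_colours A v -> sees_colours (A :\ x) v.
Proof.
move=> nevx /forallP sees; apply/forallP => j; apply/implyP => jv.
have /existsP [w /and3P [wA evw cw]] := implyP (sees j) jv.
apply/existsP; exists w; rewrite !inE wA evw cw !andbT.
by apply: contraNneq nevx => <-.
Qed.

(* In a proper c' agreeing with c on S :\ v, the vertex v has neighbours of
   every colour but c v, so c' v = c v. *)
Lemma determining_setD1 (S : {set T}) v :
  determining e c S -> sees_colours (S :\ v) v -> determining e c (S :\ v).
Proof.
move=> /determiningP detS /forallP sees; apply/determiningP => c' pc' agr.
have c'v : c' v = c v.
  apply/eqP; apply/negP => /negP c'v.
  have /existsP [w /andP [wS /andP [evw /eqP cw]]] := implyP (sees _) c'v.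
  by move/properP/(_ v w evw): pc'; rewrite (agr w wS) cw eqxx.
apply: detS => // s sS; case: (eqVneq s v) => [->|sv] //.
by apply: agr; rewrite !inE sv.
Qed.

Lemma determining_setT : determining e c [set: T].
Proof. by apply/determiningP => c' _ agr; apply/ffunP => v; apply: agr. Qed.

Lemma determining_setD2 x y : b_vertex x ->
  sees_colours ([set: T] :\ x) y -> determining e c ([set: T] :\ x :\ y).
Proof.
move=> bx sy; apply: determining_setD1; last by apply: sees_colours_setD1; rewrite ?e_irr.
by apply: determining_setD1 determining_setT _; apply: sees_colours_setD1; rewrite ?e_irr.
Qed.

End Determining.

Lemma colourable_avoiding k (c : colouring T k.+1) i :
  Defs.proper e c -> (forall v, c v != i) -> colourable e k.
Proof.
move=> /properP pc ci; apply/existsP.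
case: k c i pc ci => [|k] c i pc ci.
  have T0 : #|T| = 0 by apply: eq_card0 => v; move: (ci v); rewrite !ord1 eqxx.
  by exists (ffun0 T0 : colouring T 0); apply/properP => u; move: (ci u); rewrite !ord1 eqxx.
pose c' : colouring T k.+1 := [ffun v => odflt ord0 (unlift i (c v))].
have c'K v : c v = lift i (c' v).
  have iv : i != c v by rewrite eq_sym.
  by rewrite ffunE; have [j -> ->] := unlift_some iv.
exists c'; apply/properP => u v euv.
by apply: contra (pc u v euv) => /eqP c'uv; rewrite !c'K c'uv.
Qed.

(* Each vertex of colour i that is not a b-vertex misses some other colour
   in its neighbourhood and moves to it; colour class i is independent, so
   the result stays proper. *)
Lemma recolour_class k (c : colouring T k) i : Defs.proper e c ->
  (forall v, c v = i -> ~~ b_vertex c v) ->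
  exists2 c' : colouring T k, Defs.proper e c' & forall v, c' v != i.
Proof.
move=> /properP pc no_b.
pose missing v j := (j != c v) && ~~ [exists w in [set: T], e v w && (c w == j)].
pose m v := odflt i [pick j | missing v j].
have mP v : c v = i -> missing v (m v).
  move=> cv; rewrite /m; case: pickP => [//|none].
  have /forallPn [j] := no_b v cv; rewrite negb_imply => mj.
  by move: (none j); rewrite /missing mj.
pose c' : colouring T k := [ffun v => if c v == i then m v else c v].
have c'_moved a b : e a b -> c a = i -> c b != i -> c' a != c' b.
  move=> eab ca cb; rewrite !ffunE ca eqxx (negbTE cb).
  have /andP [_ /existsPn /(_ b)] := mP a ca.
  by rewrite in_setT eab /=; apply: contra => /eqP ->.
exists c'.
  apply/properP => u v euv.
  have [cu|cu] := eqVneq (c u) i; have [cv|cv] := eqVneq (c v) i.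
  - by move: (pc u v euv); rewrite cu cv eqxx.
  - exact: c'_moved.
  - by rewrite eq_sym; apply: c'_moved => //; rewrite e_sym.
  - by rewrite !ffunE (negbTE cu) (negbTE cv); apply: pc.
move=> v; rewrite ffunE; have [cv|//] := eqVneq (c v) i.
by have /andP [] := mP v cv; rewrite cv.
Qed.

Lemma chi_colouring_b_vertex k (c : colouring T k) : is_chi e k ->
  Defs.proper e c -> forall i, exists2 v, c v = i & b_vertex c v.
Proof.
case: k c => [|k] c [_ min_k] pc i; first by case: i.
have [/existsP [v /andP [/eqP cv bv]]|/existsPn no_b] :=
  boolP [exists v, (c v == i) && b_vertex c v]; first by exists v.
have [c' pc' c'i] : exists2 c' : colouring T k.+1, Defs.proper e c' & forall v, c' v != i.
  by apply: recolour_class pc _ => v cv; move: (no_b v); rewrite cv eqxx.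
by move: (min_k k (ltnSn k)); rewrite (colourable_avoiding pc' c'i).
Qed.

Section NonComplete.
Variables (k : nat) (c : colouring T k).
Hypotheses (chi_k : is_chi e k) (pc : Defs.proper e c).

(* [g] has the colour of the non-b-vertex [u], so [f] still sees that colour
   through [u] once [g] is removed, and sees its other colours on vertices
   of colours different from that of [g]. *)
Lemma b_pair_of_edge f u g : e f u -> b_vertex c f -> ~~ b_vertex c u ->
  b_vertex c g -> c g = c u -> g != f /\ sees_colours c ([set: T] :\ g) f.
Proof.
move=> efu bf nbu bg cg; split.
  by apply: contraTneq (elimT (properP c) pc f u efu) => <-; rewrite cg eqxx.
apply/forallP => j; apply/implyP => jf.
have [->|ju] := eqVneq j (c u).
  apply/existsP; exists u; rewrite !inE efu eqxx !andbT.
  by apply: contraNneq nbu => ->.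
have /existsP [w /andP [_ /andP [efw /eqP cw]]] := implyP (forallP bf j) jf.
apply/existsP; exists w; rewrite !inE efw cw eqxx !andbT.
by apply: contra_neq ju => wg; rewrite -cw wg cg.
Qed.

Lemma b_pair_exists : connected_graph e -> ~ complete_graph e ->
  exists x y, [/\ x != y, b_vertex c x & sees_colours c ([set: T] :\ x) y].
Proof.
move=> conn ncomp; have [all_b|] := boolP [forall v, b_vertex c v].
  have /forallPn [x /forallPn [y]] : ~~ [forall u, forall v, (u != v) ==> e u v].
    by apply/negP => /completeP.
  rewrite negb_imply => /andP [xy nexy]; exists x, y; split => //.
    exact: forallP all_b x.
  by apply: sees_colours_setD1; [rewrite e_sym | exact: forallP all_b y].
move=> /forallPn [v nbv].
have [f0 _ bf0] := chi_colouring_b_vertex chi_k pc (c v).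
have [f [u [efu bf nbu]]] := connect_cross (conn f0 v) bf0 nbv.
have [g cg bg] := chi_colouring_b_vertex chi_k pc (c u).
have [gf sf] := b_pair_of_edge efu bf nbu bg cg.
by exists g, f.
Qed.

Lemma scs_noncomplete : connected_graph e -> ~ complete_graph e ->
  scs e c + 2 <= #|T|.
Proof.
move=> conn ncomp; have [x [y [xy bx sy]]] := b_pair_exists conn ncomp.
have := scs_leq_card (determining_setD2 bx sy).
have := cardsD1 x [set: T]; have := cardsD1 y ([set: T] :\ x).
by rewrite !inE cardsT eq_sym xy; lia.
Qed.

End NonComplete.

Section Complete.
Hypothesis comp : complete_graph e.

Lemma complete_properP k (c : colouring T k) : reflect (injective c) (Defs.proper e c).
Proof.
apply: (iffP (properP c)) => [pc u v cuv|c_inj u v euv].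
  have [//|uv] := eqVneq u v.
  by move: (pc u v (comp uv)); rewrite cuv eqxx.
by apply: contraTneq euv => /c_inj ->; rewrite e_irr.
Qed.

Lemma complete_chi k : is_chi e k -> k = #|T|.
Proof.
move=> [/existsP [c /complete_properP c_inj] min_k]; apply/eqP; rewrite eqn_leq.
have -> : #|T| <= k by rewrite -[k]card_ord; apply: leq_card c_inj.
by rewrite leqNgt andbT; apply: contraL colourable_card; apply: min_k.
Qed.

Section CompleteColouring.
Variables (k : nat) (c : colouring T k).
Hypothesis pc : Defs.proper e c.

(* Two vertices outside S could swap colours. *)
Lemma complete_determining_card S : determining e c S -> #|T| <= #|S|.+1.
Proof.
move=> /determiningP detS; suff: #|~: S| <= 1 by rewrite -(cardsC S); lia.
rewrite leqNgt; apply/negP => /card_gt1P [u [w [uS wS uw]]].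
have c_inj : injective c by apply/complete_properP.
pose c' : colouring T k := [ffun z => c (tperm u w z)].
have c'u : c' u != c u by rewrite ffunE tpermL; apply: contra_neq uw => /c_inj ->.
suff c'c : c' = c by rewrite c'c eqxx in c'u.
apply: detS => [|s sS].
  by apply/complete_properP => x y; rewrite !ffunE => /c_inj /perm_inj.
rewrite ffunE tpermD //.
  by apply: contraTneq uS => ->; rewrite inE negbK.
by apply: contraTneq wS => ->; rewrite inE negbK.
Qed.

Hypothesis card_k : #|T| = k.

Lemma complete_determining_setD1 v : determining e c ([set: T] :\ v).
Proof.
apply: determining_setD1 (determining_setT c) _.
apply/forallP => j; apply/implyP => jv.
have c_inj : injective c by apply/complete_properP.
have /codomP [w jw] : j \in codom c by apply: inj_card_onto; rewrite ?card_ord ?card_k.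
apply/existsP; exists w; rewrite !inE -jw eqxx andbT.
have wv : w != v by apply: contra_neq jv => wv; rewrite jw wv.
by rewrite wv comp // eq_sym.
Qed.

Lemma scs_complete : 0 < #|T| -> scs e c = #|T| - 1.
Proof.
case/card_gt0P => v _; apply/eqP; rewrite eqn_leq; apply/andP; split.
  have := scs_leq_card (complete_determining_setD1 v).
  by have := cardsD1 v [set: T]; rewrite in_setT cardsT; lia.
apply: leq_scs; first exact: leq_subr.
by move=> S /complete_determining_card; lia.
Qed.

End CompleteColouring.
End Complete.

Lemma sn_leq_scs k (c : colouring T k) : Defs.proper e c -> sn e k <= scs e c.
Proof. exact: geq_bigmin_cond. Qed.

Lemma scs_leq_scsbar k (c : colouring T k) : Defs.proper e c -> scs e c <= scsbar e k.
Proof. exact: leq_bigmax_cond. Qed.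

Lemma sn_scsbar_const k m : colourable e k -> m <= #|T| ->
  (forall c : colouring T k, Defs.proper e c -> scs e c = m) ->
  sn e k = m /\ scsbar e k = m.
Proof.
move=> /existsP [c pc] mT scs_m; split; apply/eqP; rewrite eqn_leq.
  by rewrite -{1}(scs_m c pc) sn_leq_scs //; apply: leq_bigmin => // c' /scs_m ->.
by rewrite -{2}(scs_m c pc) scs_leq_scsbar // andbT; apply/bigmax_leqP => c' /scs_m ->.
Qed.

End Colourings.

Theorem theorem2 (T : finType) (e : rel T)
  (e_sym : symmetric e) (e_irr : irreflexive e)
  (e_conn : connected_graph e) (n : nat) (hn : #|T| = n) (hn0 : 0 < n)
  (k : nat) (hk : is_chi e k) :
  (sn e k = n - 1 <-> complete_graph e) /\
  (scsbar e k = n - 1 <-> complete_graph e).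
Proof.
subst n; have [colk _] := hk.
have [comp|ncomp] := completeP e.
  have card_k := esym (complete_chi e_irr comp hk).
  have [-> ->] : sn e k = #|T| - 1 /\ scsbar e k = #|T| - 1.
    by apply: sn_scsbar_const => // [|c pc]; [exact: leq_subr | exact: scs_complete].
  by [].
have [c0 pc0] := existsP colk.
have scs_small (c : colouring T k) : Defs.proper e c -> scs e c + 2 <= #|T|.
  by move=> pc; apply: scs_noncomplete.
have sn_small : sn e k + 2 <= #|T|.
  by apply: leq_trans (scs_small c0 pc0); rewrite leq_add2r sn_leq_scs.
have scsbar_small : scsbar e k <= #|T| - 2.
  by apply/bigmax_leqP => c /scs_small; lia.
by split; split => // eq_n1; lia.
Qed.
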